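(* Let $M \ge 1$, $\mathcal{Y} = \{1,\ldots,M\}$, $K \le M$, and let ${\bm V} \in \mathbb{R}^{M\times K}$, so that ${\bm L} = {\bm V}{\bm V}^\top$ is a positive semi-definite kernel of rank at most $K$ defining a determinantal point process (DPP) on $\mathcal{Y}$. Let $A \subseteq \mathcal{Y}$ and $\bar A = \mathcal{Y}\setminus A$. Then the conditional marginal probabilities $P_i = \Pr(i \in Y \mid A \subseteq Y)$, for all $i \in \bar A$, of the DPP conditioned on the event that all items of $A$ are observed (i.e. of the DPP on $\bar A$ with conditioned kernel ${\bm L}^A$) can be computed, given ${\bm V}$ and $A$, in $\mathcal{O}(K^3 + |A|^3 + K^2|A|^2 + |\bar A|K^2)$ time.
   Context: A determinantal point process on the finite ground set $\mathcal{Y}$ with positive semi-definite kernel ${\bm L}\in\mathbb{R}^{M\times M}$ is the probability distribution on random subsets $Y\subseteq\mathcal{Y}$ given by $\Pr(Y = S) = \det({\bm L}_S)/\det({\bm L}+{\bm I})$, where ${\bm L}_S = [{\bm L}_{ij}]_{i,j\in S}$ (with $\det$ of the empty matrix equal to $1$). For $A \subseteq \mathcal{Y}$ with $\Pr(A\subseteq Y)>0$, conditioning this DPP on the event $A \subseteq Y$ gives a distribution of $Y\setminus A$ that is again a DPP on $\bar A = \mathcal{Y}\setminus A$, with kernel ${\bm L}^A$; its marginal probabilities are $P_i = \Pr(i\in Y \mid A\subseteq Y)$ for $i \in \bar A$. Time is measured in arithmetic operations on real numbers. *)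

From HB Require Import structures.
From mathcomp Require Import all_boot all_order all_algebra.
Set Implicit Arguments. Unset Strict Implicit. Unset Printing Implicit Defensive.
Import Order.TTheory GRing.Theory Num.Theory.
Local Open Scope ring_scope.

(* Principal submatrix L_S, rows/columns indexed by the elements of S
   (listed in the enumeration order of S; the determinant does not depend
   on this order).  For S = set0 it is the 0x0 matrix, whose det is 1. *)
Definition principal {R : pzRingType} {M : nat} (L : 'M[R]_M) (S : {set 'I_M})
  : 'M[R]_#|S| :=
  \matrix_(i, j) L (enum_val i) (enum_val j).

Definition dpp_prob {R : fieldType} {M : nat} (L : 'M[R]_M) (S : {set 'I_M}) : R :=
  \det (principal L S) / \det (L + 1%:M).

Definition dpp_prob_contains {R : fieldType} {M : nat} (L : 'M[R]_M)
  (A : {set 'I_M}) : R :=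
  \sum_(S : {set 'I_M} | A \subset S) dpp_prob L S.

Definition dpp_cond_marginal {R : fieldType} {M : nat} (L : 'M[R]_M)
  (A : {set 'I_M}) (i : 'I_M) : R :=
  dpp_prob_contains L (i |: A) / dpp_prob_contains L A.

Definition lowrank_kernel {R : comPzRingType} {M K : nat} (V : 'M[R]_(M, K))
  : 'M[R]_M := V *m V^T.

(* Registers start out holding the inputs; each instruction performs
   one arithmetic operation (+, -, *, /) on two operands (registers or
   real constants) and appends its result as a new register.  Cost =
   number of instructions = number of arithmetic operations.  A division
   by zero (or reference to a nonexistent register) makes the run fail. *)

Inductive operand (R : Type) := Reg of nat | Cst of R.
Arguments Reg {R}.

Inductive instr (R : Type) :=
| IAdd of operand R & operand R
| ISub of operand R & operand R
| IMul of operand R & operand R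
| IDiv of operand R & operand R.

Definition slp (R : Type) := seq (instr R).

Definition eval_operand {R : fieldType} (regs : seq R) (o : operand R) : option R :=
  match o with
  | Reg n => if (n < size regs)%N then Some (nth 0 regs n) else None
  | Cst c => Some c
  end.

Definition exec_instr {R : fieldType} (regs : seq R) (ins : instr R) : option R :=
  match ins with
  | IAdd a b => obind (fun x => omap (fun y => x + y) (eval_operand regs b))
                      (eval_operand regs a)
  | ISub a b => obind (fun x => omap (fun y => x - y) (eval_operand regs b))
                      (eval_operand regs a)
  | IMul a b => obind (fun x => omap (fun y => x * y) (eval_operand regs b))
                      (eval_operand regs a)
  | IDiv a b => obind (fun x => obind (fun y => if y == 0 then None
                                                else Some (x / y))
                                      (eval_operand regs b))
                      (eval_operand regs a)
  end.

Fixpoint exec_slp {R : fieldType} (regs : seq R) (p : slp R) : option (seq R) :=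
  match p with
  | [::] => Some regs
  | ins :: p' =>
      match exec_instr regs ins with
      | Some v => exec_slp (rcons regs v) p'
      | None => None
      end
  end.

Definition run_slp {R : fieldType} (p : slp R) (inputs : seq R) (o : operand R)
  : option R :=
  obind (fun regs => eval_operand regs o) (exec_slp inputs p).

Definition mx_inputs {R : Type} {M K : nat} (V : 'M[R]_(M, K)) : seq R :=
  [seq V ij.1 ij.2 | ij <- enum [set: 'I_M * 'I_K]].

From HB Require Import structures.
From mathcomp Require Import all_boot all_order all_algebra perm zify.
Set Implicit Arguments. Unset Strict Implicit. Unset Printing Implicit Defensive.
Import Order.TTheory GRing.Theory Num.Theory.
Local Open Scope ring_scope.

(* Write N_A := L + I_{~A}.  Summing principal minors gives
   Pr(A <= Y) = det N_A / det (L + I), and since N_A and N_{A + i} differ in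
   one row, P_i = 1 - (N_A^-1)_ii.  For L = V V^T the Woodbury identity gives
   (N_A^-1)_ii = 1 - v_i G v_i^T, where G = B - B V_A^T (V_A B V_A^T)^-1 V_A B,
   B = (V^T V + I)^-1 and V_A collects the rows of V indexed by A.  Both
   matrices to invert are positive definite (the second because N_A is
   invertible when Pr(A <= Y) > 0), so Gaussian elimination without pivoting
   inverts them by a straight-line program of cubic size.  Forming B, G and the
   M quadratic forms v_i G v_i^T costs O(K^3 + |A|^3 + K^2 |A| + K |A|^2 + M K^2)
   operations, and M K^2 = |A| K^2 + |~A| K^2 with |A| K^2 <= K^2 |A|^2. *)

(** * Straight-line programs *)

Section StraightLinePrograms.
Variable R : fieldType.
Local Notation op := (operand R).

(* A generator is told the index of the first free register, so that it can
   refer to the registers written by the instructions it emits. *)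
Definition gen T := nat -> slp R * T.

Definition gret T (x : T) : gen T := fun=> ([::], x).

Definition gbind T U (m : gen T) (f : T -> gen U) : gen U :=
  fun n => let q := f (m n).2 (n + size (m n).1)%N in ((m n).1 ++ q.1, q.2).

Definition emit (i : instr R) : gen op := fun n => ([:: i], Reg n).

Definition ev (r : seq R) (o : op) (v : R) := eval_operand r o = Some v.

Definition wp T (m : gen T) (r : seq R) (Q : seq R -> T -> Prop) :=
  exists s, exec_slp r (m (size r)).1 = Some (r ++ s) /\ Q (r ++ s) (m (size r)).2.

Definition costle T (m : gen T) (c : nat) := forall n, (size (m n).1 <= c)%N.

Lemma exec_slp_cat (r : seq R) (p q : slp R) :
  exec_slp r (p ++ q) = obind (exec_slp^~ q) (exec_slp r p).
Proof. by elim: p r => [|i p IH] r //=; case: exec_instr. Qed.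

Lemma size_exec_slp (r r' : seq R) (p : slp R) :
  exec_slp r p = Some r' -> size r' = (size r + size p)%N.
Proof.
elim: p r => [|i p IH] r /=; first by case=> <-; rewrite addn0.
by case: exec_instr => // v /IH ->; rewrite size_rcons addSnnS.
Qed.

Lemma ev_cat r s o v : ev r o v -> ev (r ++ s) o v.
Proof.
case: o => [n|c] //; rewrite /ev /=.
by case: ifP => // lt_n [<-]; rewrite size_cat ltn_addr // nth_cat lt_n.
Qed.

Lemma ev_cst r (c : R) : ev r (Cst c) c.
Proof. by []. Qed.

Lemma wp_ret T (x : T) r (Q : seq R -> T -> Prop) : Q r x -> wp (gret x) r Q.
Proof. by exists [::]; rewrite cats0. Qed.

Lemma wp_conseq T (m : gen T) r (P Q : seq R -> T -> Prop) :
  wp m r P -> (forall s a, P (r ++ s) a -> Q (r ++ s) a) -> wp m r Q.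
Proof. by case=> s [Em Ps] PQ; exists s; split=> //; apply: PQ. Qed.

Lemma wp_seq T U (m : gen T) (f : T -> gen U) r P Q :
  wp m r P -> (forall s a, P (r ++ s) a -> wp (f a) (r ++ s) Q) ->
  wp (gbind m f) r Q.
Proof.
case=> s [Em Ps] /(_ s _ Ps) [t [Ef Qt]].
have /eqP : size (r ++ s) = (size r + size (m (size r)).1)%N by apply: size_exec_slp.
rewrite size_cat eqn_add2l => /eqP sz_s.
exists (s ++ t); rewrite /gbind /= exec_slp_cat Em /= -sz_s -size_cat catA.
by split.
Qed.

Lemma wp_emit i r v :
  exec_instr r i = Some v -> wp (emit i) r (fun r' o => ev r' o v).
Proof.
move=> Ei; exists [:: v]; rewrite /= Ei cats1; split=> //.
by rewrite /ev /= size_rcons ltnSn nth_rcons ltnn eqxx.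
Qed.

Section Arithmetic.
Variables (r : seq R) (a b : op) (x y : R).
Hypotheses (Ha : ev r a x) (Hb : ev r b y).

Lemma wp_add : wp (emit (IAdd a b)) r (fun r' o => ev r' o (x + y)).
Proof. by apply: wp_emit; rewrite /= Ha Hb. Qed.

Lemma wp_sub : wp (emit (ISub a b)) r (fun r' o => ev r' o (x - y)).
Proof. by apply: wp_emit; rewrite /= Ha Hb. Qed.

Lemma wp_mul : wp (emit (IMul a b)) r (fun r' o => ev r' o (x * y)).
Proof. by apply: wp_emit; rewrite /= Ha Hb. Qed.

Lemma wp_div : y != 0 -> wp (emit (IDiv a b)) r (fun r' o => ev r' o (x / y)).
Proof. by move=> y0; apply: wp_emit; rewrite /= Ha Hb /= (negbTE y0). Qed.

End Arithmetic.

Lemma cost_ret T (x : T) : costle (gret x) 0.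
Proof. by []. Qed.

Lemma cost_emit i : costle (emit i) 1.
Proof. by []. Qed.

Lemma cost_bind T U (m : gen T) (f : T -> gen U) c d :
  costle m c -> (forall a, costle (f a) d) -> costle (gbind m f) (c + d).
Proof. by move=> Hm Hf n; rewrite size_cat; apply: leq_add (Hm n) (Hf _ _). Qed.

Lemma cost_le T (m : gen T) c d : costle m c -> (c <= d)%N -> costle m d.
Proof. by move=> Hm le_cd n; apply: leq_trans le_cd. Qed.

Fixpoint gfor (T : eqType) (f : T -> gen op) (l : seq T) : gen (T -> op) :=
  if l is t :: l' then
    gbind (f t) (fun o => gbind (gfor f l') (fun g =>
      gret (fun t' => if t' == t then o else g t')))
  else gret (fun=> Cst 0).

Lemma wp_gfor (T : eqType) (f : T -> gen op) (val : T -> R) l r :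
  (forall t s, wp (f t) (r ++ s) (fun r' o => ev r' o (val t))) ->
  wp (gfor f l) r (fun r' g => forall t, t \in l -> ev r' (g t) (val t)).
Proof.
elim: l r => [|t l IH] r Hf /=; first by apply: wp_ret.
have := Hf t [::]; rewrite cats0 => Hft.
apply: (wp_seq Hft) => s o Ho; apply: (wp_seq (IH _ _)) => [t' s'|s' g Hg].
  by rewrite -catA; apply: Hf.
apply: wp_ret => t'; rewrite inE; case: eqP => [-> _|_ /Hg //].
exact: ev_cat.
Qed.

Lemma cost_gfor (T : eqType) (f : T -> gen op) l c :
  (forall t, costle (f t) c) -> costle (gfor f l) (c * size l)%N.
Proof.
move=> Hf; elim: l => [|t l IH] /=; first by rewrite muln0.
apply: (@cost_le _ _ (c + (c * size l + 0))%N); last by rewrite addn0 mulnS.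
by apply: cost_bind => // o; apply: cost_bind => // g; apply: cost_ret.
Qed.

Definition evm m n (r : seq R) (O : 'M[op]_(m, n)) (X : 'M[R]_(m, n)) :=
  forall i j, ev r (O i j) (X i j).

Lemma evm_cat m n r s (O : 'M[op]_(m, n)) X : evm r O X -> evm (r ++ s) O X.
Proof. by move=> HO i j; apply: ev_cat. Qed.

Definition mx_gen m n (f : 'I_m -> 'I_n -> gen op) : gen 'M[op]_(m, n) :=
  gbind (gfor (fun ij => f ij.1 ij.2) (enum [set: 'I_m * 'I_n]))
        (fun g => gret (\matrix_(i, j) g (i, j))).

Lemma wp_mx_gen m n (f : 'I_m -> 'I_n -> gen op) (X : 'M[R]_(m, n)) r :
  (forall i j s, wp (f i j) (r ++ s) (fun r' o => ev r' o (X i j))) ->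
  wp (mx_gen f) r (fun r' O => evm r' O X).
Proof.
move=> Hf; apply: (wp_seq (wp_gfor (val := fun ij => X ij.1 ij.2) _ _)).
  by case=> i j s; apply: Hf.
move=> s g Hg; apply: wp_ret => i j; rewrite mxE.
by apply: (Hg (i, j)); rewrite mem_enum inE.
Qed.

Lemma cost_mx_gen m n (f : 'I_m -> 'I_n -> gen op) c :
  (forall i j, costle (f i j) c) -> costle (mx_gen f) (c * (m * n))%N.
Proof.
move=> Hf; rewrite -[(c * _)%N]addn0.
apply: cost_bind => [|g]; last exact: cost_ret.
have -> : (m * n = size (enum [set: 'I_m * 'I_n]))%N.
  by rewrite -cardE cardsT card_prod !card_ord.
by apply: cost_gfor => -[i j]; apply: Hf.
Qed.

End StraightLinePrograms.
Arguments gret {R T} x _.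

Ltac frame :=
  lazymatch goal with |- wp _ (?r ++ ?s) _ =>
    repeat match goal with
    | H : ev r _ _ |- _ => move/(ev_cat s): H => H
    | H : evm r _ _ |- _ => move/(evm_cat s): H => H
    end
  end.

Notation "'do' x <- m ; e" := (gbind m (fun x => e))
  (at level 200, x name, m at level 100, e at level 200, format "'do'  x  <-  m ;  '/' e").

Section MatrixPrograms.
Variable R : fieldType.
Local Notation op := (operand R).
Implicit Types r s : seq R.

Fixpoint dot_gen q (x y : 'I_q -> op) (l : seq 'I_q) (acc : op) : gen R op :=
  if l is k :: l' then
    do t <- emit (IMul (x k) (y k)); do acc' <- emit (IAdd acc t); dot_gen x y l' acc'
  else gret acc.

Lemma wp_dot_gen q (x y : 'I_q -> op) (xv yv : 'I_q -> R) l acc a r :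
  (forall k, ev r (x k) (xv k)) -> (forall k, ev r (y k) (yv k)) -> ev r acc a ->
  wp (dot_gen x y l acc) r (fun r' o => ev r' o (a + \sum_(k <- l) xv k * yv k)).
Proof.
elim: l r acc a => [|k l IH] r acc a Hx Hy Hacc /=.
  by apply: wp_ret; rewrite big_nil addr0.
apply: (wp_seq (wp_mul (Hx k) (Hy k))) => s t Ht; frame.
apply: (wp_seq (wp_add Hacc Ht)) => s' acc' Hacc'.
by rewrite big_cons addrA; apply: IH => // k'; rewrite -catA; apply: ev_cat.
Qed.

Lemma cost_dot_gen q (x y : 'I_q -> op) l acc :
  costle (dot_gen x y l acc) (2 * size l)%N.
Proof.
elim: l acc => [|k l IH] acc /=; first exact: cost_ret.
rewrite mulnS -add1n -addnA; apply: cost_bind => [|t]; first exact: cost_emit.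
by apply: cost_bind => [|a]; [exact: cost_emit | exact: IH].
Qed.

Definition mul_gen p q n (X : 'M[op]_(p, q)) (Y : 'M[op]_(q, n)) : gen R 'M[op]_(p, n) :=
  mx_gen (fun i j => dot_gen (fun k => X i k) (fun k => Y k j) (index_enum 'I_q) (Cst 0)).

Lemma wp_mul_gen p q n (X : 'M[op]_(p, q)) (Y : 'M[op]_(q, n)) Xv Yv r :
  evm r X Xv -> evm r Y Yv -> wp (mul_gen X Y) r (fun r' Z => evm r' Z (Xv *m Yv)).
Proof.
move=> HX HY; apply: wp_mx_gen => i j s; rewrite mxE -[\sum_k _]add0r.
by apply: wp_dot_gen => // k; [exact: (evm_cat s HX i k) | exact: (evm_cat s HY k j)].
Qed.

Lemma cost_mul_gen p q n (X : 'M[op]_(p, q)) (Y : 'M[op]_(q, n)) :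
  costle (mul_gen X Y) (2 * p * q * n)%N.
Proof.
apply: cost_le (cost_mx_gen (c := 2 * q) _) _; last by nia.
move=> i j; have := cost_dot_gen (fun k => X i k) (fun k => Y k j) (index_enum 'I_q) (Cst 0).
by rewrite /index_enum -enumT size_enum_ord.
Qed.

Definition sub_gen m n (X Y : 'M[op]_(m, n)) : gen R 'M[op]_(m, n) :=
  mx_gen (fun i j => emit (ISub (X i j) (Y i j))).

Definition opp_gen m n (X : 'M[op]_(m, n)) : gen R 'M[op]_(m, n) :=
  mx_gen (fun i j => emit (ISub (Cst 0) (X i j))).

Definition scale_gen m n (a : op) (X : 'M[op]_(m, n)) : gen R 'M[op]_(m, n) :=
  mx_gen (fun i j => emit (IMul a (X i j))).

Definition add1_gen n (X : 'M[op]_n) : gen R 'M[op]_n :=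
  mx_gen (fun i j => emit (IAdd (X i j) (Cst (i == j)%:R))).

Section Entrywise.
Variables (m n : nat) (r : seq R) (X Y : 'M[op]_(m, n)) (Xv Yv : 'M[R]_(m, n)).
Hypotheses (HX : evm r X Xv) (HY : evm r Y Yv).

Lemma wp_sub_gen : wp (sub_gen X Y) r (fun r' Z => evm r' Z (Xv - Yv)).
Proof.
apply: wp_mx_gen => i j s; rewrite !mxE.
exact: wp_sub (evm_cat s HX i j) (evm_cat s HY i j).
Qed.

Lemma wp_opp_gen : wp (opp_gen X) r (fun r' Z => evm r' Z (- Xv)).
Proof.
apply: wp_mx_gen => i j s; rewrite !mxE -sub0r.
exact: wp_sub (ev_cst _ 0) (evm_cat s HX i j).
Qed.

Lemma wp_scale_gen a av :
  ev r a av -> wp (scale_gen a X) r (fun r' Z => evm r' Z (av *: Xv)).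
Proof.
move=> Ha; apply: wp_mx_gen => i j s; rewrite !mxE.
exact: wp_mul (ev_cat s Ha) (evm_cat s HX i j).
Qed.

Lemma cost_sub_gen : costle (sub_gen X Y) (m * n)%N.
Proof. by rewrite -[(m * n)%N]mul1n; apply: cost_mx_gen => i j; apply: cost_emit. Qed.

Lemma cost_opp_gen : costle (opp_gen X) (m * n)%N.
Proof. by rewrite -[(m * n)%N]mul1n; apply: cost_mx_gen => i j; apply: cost_emit. Qed.

Lemma cost_scale_gen a : costle (scale_gen a X) (m * n)%N.
Proof. by rewrite -[(m * n)%N]mul1n; apply: cost_mx_gen => i j; apply: cost_emit. Qed.

End Entrywise.

Lemma wp_add1_gen n (X : 'M[op]_n) Xv r :
  evm r X Xv -> wp (add1_gen X) r (fun r' Z => evm r' Z (Xv + 1%:M)).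
Proof.
move=> HX; apply: wp_mx_gen => i j s; rewrite !mxE.
exact: wp_add (evm_cat s HX i j) (ev_cst _ _).
Qed.

Lemma cost_add1_gen n (X : 'M[op]_n) : costle (add1_gen X) (n * n)%N.
Proof. by rewrite -[(n * n)%N]mul1n; apply: cost_mx_gen => i j; apply: cost_emit. Qed.

Lemma evm_tr m n r (O : 'M[op]_(m, n)) X : evm r O X -> evm r O^T X^T.
Proof. by move=> HO i j; rewrite !mxE. Qed.

Lemma evm_row m n r (O : 'M[op]_(m, n)) X i : evm r O X -> evm r (row i O) (row i X).
Proof. by move=> HO ? j; rewrite !mxE. Qed.

Section Blocks.
Variables (m1 m2 n1 n2 : nat) (r : seq R).

Lemma evm_block (O1 : 'M[op]_(m1, n1)) (O2 : 'M[op]_(m1, n2)) (O3 : 'M[op]_(m2, n1))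
    (O4 : 'M[op]_(m2, n2)) X1 X2 X3 X4 :
  evm r O1 X1 -> evm r O2 X2 -> evm r O3 X3 -> evm r O4 X4 ->
  evm r (block_mx O1 O2 O3 O4) (block_mx X1 X2 X3 X4).
Proof.
move=> H1 H2 H3 H4 i j; rewrite -(splitK i) -(splitK j).
case: (split i) => a; case: (split j) => b.
- by rewrite !block_mxEul.
- by rewrite !block_mxEur.
- by rewrite !block_mxEdl.
- by rewrite !block_mxEdr.
Qed.

Variables (O : 'M[op]_(m1 + m2, n1 + n2)) (X : 'M[R]_(m1 + m2, n1 + n2)).
Hypothesis HO : evm r O X.

Lemma evm_ulsub : evm r (ulsubmx O) (ulsubmx X). Proof. by move=> i j; rewrite !mxE. Qed.
Lemma evm_ursub : evm r (ursubmx O) (ursubmx X). Proof. by move=> i j; rewrite !mxE. Qed.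
Lemma evm_dlsub : evm r (dlsubmx O) (dlsubmx X). Proof. by move=> i j; rewrite !mxE. Qed.
Lemma evm_drsub : evm r (drsubmx O) (drsubmx X). Proof. by move=> i j; rewrite !mxE. Qed.

End Blocks.

End MatrixPrograms.

Ltac cost_leaf := first
  [ exact: cost_emit | exact: cost_mul_gen | exact: cost_sub_gen | exact: cost_opp_gen
  | exact: cost_scale_gen | exact: cost_add1_gen | exact: cost_ret ].

(** * Inverting positive definite matrices *)

Lemma invmx_unique (R : comUnitRingType) n (A B : 'M[R]_n) :
  A *m B = 1%:M -> invmx A = B.
Proof.
move=> AB1; have [uA _] := mulmx1_unit AB1.
by rewrite -[invmx A]mulmx1 -AB1 mulmxA mulVmx // mul1mx.
Qed.

Section Pivot.
Variables (R : fieldType) (n : nat).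
Implicit Type X : 'M[R]_(1 + n).

Definition pivot X := ulsubmx X 0 0.

Definition schur X := drsubmx X - ((pivot X)^-1 *: dlsubmx X) *m ursubmx X.

Lemma pivot_block X : X = block_mx (pivot X)%:M (ursubmx X) (dlsubmx X) (drsubmx X).
Proof.
rewrite -{1}(submxK X); congr block_mx.
by apply/matrixP => i j; rewrite !ord1 [RHS]mxE eqxx mulr1n.
Qed.

Lemma invmx_pivot X : pivot X != 0 -> schur X \in unitmx ->
  let a := pivot X in let u := a^-1 *: dlsubmx X in
  let Si := invmx (schur X) in let y := ursubmx X *m Si in
  invmx X = block_mx (a^-1 + (y *m u) 0 0 * a^-1)%:M (- (a^-1 *: y)) (- (Si *m u)) Si.
Proof.
move=> a0 uS a u Si y; apply: invmx_unique; set w := (y *m u) 0 0.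
have yu : y *m u = w%:M by apply: mx11_scalar.
have SSi : schur X *m Si = 1%:M by apply: mulmxV.
have DE : drsubmx X = schur X + u *m ursubmx X by rewrite addrNK.
rewrite [X in X *m _]pivot_block -/a mulmx_block (scalar_mx_block 1 n 1); congr block_mx.
- rewrite -scalar_mxM mulmxN mulmxA -/y yu -raddfB /=; congr scalar_mx.
  by rewrite mulrDr mulrA mulfV // mulrAC mulfV // mul1r addrK.
- by rewrite mulmxN mul_scalar_mx scalerA mulfV // scale1r addNr.
- rewrite mul_mx_scalar DE mulmxN mulmxDl mulmxA SSi mul1mx -mulmxA (mulmxA (ursubmx X)).
  rewrite -/y yu mul_mx_scalar scalerDl -scalerA -/u.
  by rewrite opprD addrACA !subrr addr0.
- rewrite mulmxN -scalemxAr scalemxAl -/u DE mulmxDl SSi -mulmxA -/y.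
  by rewrite addrCA addNr addr0.
Qed.

End Pivot.

Section InversionProgram.
Variable R : fieldType.
Local Notation op := (operand R).

(* Eliminate the leading entry and recurse on the Schur complement, returning
   the block inverse of [invmx_pivot]. *)
Fixpoint inv_gen n : 'M[op]_n -> gen R 'M[op]_n :=
  if n is n'.+1 return 'M[op]_n -> gen R 'M[op]_n then fun X : 'M[op]_(1 + n') =>
    do ai <- emit (IDiv (Cst 1) (ulsubmx X 0 0));
    do u <- scale_gen ai (dlsubmx X);
    do ub <- mul_gen u (ursubmx X);
    do S <- sub_gen (drsubmx X) ub;
    do Si <- inv_gen S;
    do y <- mul_gen (ursubmx X) Si;
    do yu <- mul_gen y u;
    do t <- emit (IMul (yu 0 0) ai);
    do tl <- emit (IAdd ai t);
    do ay <- scale_gen ai y;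
    do tr <- opp_gen ay;
    do q <- mul_gen Si u;
    do bl <- opp_gen q;
    gret (block_mx (const_mx tl) tr bl Si : 'M_(1 + n'))
  else gret.

Lemma cost_inv_gen n (X : 'M[op]_n) : costle (inv_gen X) (6 * n ^ 3)%N.
Proof.
elim: n X => [|n IH] X /=; first exact: cost_ret.
eapply cost_le.
  by do 13 (apply: cost_bind => [|?]; first by [cost_leaf | apply: IH]); cost_leaf.
nia.
Qed.

End InversionProgram.


Section PositiveDefinite.
Variable R : realFieldType.

Definition posdef n (X : 'M[R]_n) :=
  X^T = X /\ forall x : 'rV_n, x != 0 -> 0 < (x *m X *m x^T) 0 0.

Lemma posdef_unitmx n (X : 'M[R]_n) : posdef X -> X \in unitmx.
Proof.
case=> _ pX; rewrite unitmxE unitfE; apply/det0P => -[x x0 xX0].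
by have := pX x x0; rewrite xX0 mul0mx mxE ltxx.
Qed.

Lemma posdef_diag_gt0 n (X : 'M[R]_n) i : posdef X -> 0 < X i i.
Proof.
case=> _ pX; have x0 : delta_mx 0 i != 0 :> 'rV[R]_n.
  by apply/negP => /eqP/matrixP/(_ 0 i); rewrite !mxE !eqxx => /eqP; rewrite oner_eq0.
by have := pX _ x0; rewrite -rowE trmx_delta -colE !mxE.
Qed.

Variable n : nat.
Implicit Type X : 'M[R]_(1 + n).

Lemma posdef_pivot_gt0 X : posdef X -> 0 < pivot X.
Proof. by move/(posdef_diag_gt0 (lshift n 0)); rewrite /pivot !mxE. Qed.

(* The quadratic form of [X] at [row_mx t y] reduces to that of [schur X] at
   [y] when [t] eliminates the cross terms. *)
Lemma posdef_schur X : posdef X -> posdef (schur X).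
Proof.
move=> pdX; have a0 := posdef_pivot_gt0 pdX; have an0 : pivot X != 0 by rewrite gt_eqF.
move: pdX; rewrite [X in posdef X]pivot_block /schur.
set a := pivot X; set b := ursubmx X; set c := dlsubmx X; set D := drsubmx X.
case; rewrite tr_block_mx => /eq_block_mx [_ cb bc DD] pX; split.
  by rewrite raddfB /= DD trmx_mul linearZ /= cb bc -scalemxAr -scalemxAl.
move=> y y0; pose t := - a^-1 * (y *m c) 0 0.
have tyc : t%:M *m a%:M + y *m c = 0.
  rewrite -scalar_mxM [y *m c]mx11_scalar -raddfD /= /t.
  by rewrite mulrAC mulNr mulVf // mulN1r addNr raddf0.
have x0 : row_mx (t%:M : 'M_1) y != 0 by rewrite row_mx_eq0 negb_and y0 orbT.
have quad : (y *m (D - (a^-1 *: c) *m b) *m y^T) 0 0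
    = t * (b *m y^T) 0 0 + (y *m D *m y^T) 0 0.
  rewrite mulmxBr mulmxBl -scalemxAl -scalemxAr -scalemxAl !mulmxA -(mulmxA (y *m c)).
  rewrite mxE [X in _ + X]mxE [X in - X]mxE [X in _ * X]mxE big_ord1 /t.
  by rewrite addrC !mulNr mulrA.
rewrite quad; have := pX _ x0.
rewrite mul_row_block tr_row_mx mul_row_col tyc mul0mx add0r mulmxDl mxE.
by rewrite mul_scalar_mx -scalemxAl mxE.
Qed.

End PositiveDefinite.

Section Inversion.
Variable R : realFieldType.
Local Notation op := (operand R).

Lemma wp_inv_gen n (X : 'M[op]_n) (Xv : 'M[R]_n) r :
  evm r X Xv -> posdef Xv -> wp (inv_gen X) r (fun r' Y => evm r' Y (invmx Xv)).
Proof.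
elim: n X Xv r => [|n IH] X Xv r HX pdX /=; first by apply: wp_ret => -[].
have a0 : pivot Xv != 0 by rewrite gt_eqF ?posdef_pivot_gt0.
have uS : schur Xv \in unitmx by apply/posdef_unitmx/posdef_schur.
have Ha := @evm_ulsub _ 1 n 1 n _ _ _ HX 0 0; have Hb := @evm_ursub _ 1 n 1 n _ _ _ HX.
have Hc := @evm_dlsub _ 1 n 1 n _ _ _ HX; have HD := @evm_drsub _ 1 n 1 n _ _ _ HX.
apply: (wp_seq (wp_div (ev_cst _ 1) Ha a0)) => s1 ai; rewrite div1r => Hai; frame.
apply: (wp_seq (wp_scale_gen Hc Hai)) => s2 u Hu; frame.
apply: (wp_seq (wp_mul_gen Hu Hb)) => s3 ub Hub; frame.
apply: (wp_seq (wp_sub_gen HD Hub)) => s4 S HS; frame.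
apply: (wp_seq (IH _ _ _ HS (posdef_schur pdX))) => s5 Si HSi; frame.
apply: (wp_seq (wp_mul_gen Hb HSi)) => s6 y Hy; frame.
apply: (wp_seq (wp_mul_gen Hy Hu)) => s7 yu Hyu; frame.
apply: (wp_seq (wp_mul (Hyu 0 0) Hai)) => s8 t Ht; frame.
apply: (wp_seq (wp_add Hai Ht)) => s9 tl Htl; frame.
apply: (wp_seq (wp_scale_gen Hy Hai)) => s10 ay Hay; frame.
apply: (wp_seq (wp_opp_gen Hay)) => s11 tr Htr; frame.
apply: (wp_seq (wp_mul_gen HSi Hu)) => s12 q Hq; frame.
apply: (wp_seq (wp_opp_gen Hq)) => s13 bl Hbl; frame.
apply: wp_ret; rewrite invmx_pivot //; apply: (@evm_block _ 1 n 1 n) => // i j.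
by rewrite !ord1 [const_mx _ _ _]mxE [X in ev _ _ X]mxE eqxx mulr1n.
Qed.

End Inversion.

(** * Conditional marginals as diagonal entries of an inverse *)

Section PrincipalMinors.
Variables (R : comPzRingType) (n : nat).
Implicit Types (X Y : 'M[R]_n) (A B S : {set 'I_n}).

Lemma eq_cofactor X Y i0 :
  (forall i j, i != i0 -> j != i0 -> X i j = Y i j) -> cofactor X i0 i0 = cofactor Y i0 i0.
Proof.
move=> eqXY; rewrite /cofactor; congr (_ * \det _).
by apply/matrixP => i j; rewrite !mxE eqXY // eq_sym neq_lift.
Qed.

Lemma expand_det_unit_row X i0 :
  (forall j, X i0 j = (i0 == j)%:R) -> \det X = cofactor X i0 i0.
Proof.
move=> Xi0; rewrite (expand_det_row X i0) (bigD1 i0) //= Xi0 eqxx mul1r.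
by rewrite big1 ?addr0 // => j ji0; rewrite Xi0 eq_sym (negbTE ji0) mul0r.
Qed.

Lemma det_add_unit_row X Y i0 :
  (forall j, X i0 j = Y i0 j + (i0 == j)%:R) ->
  (forall i j, i != i0 -> X i j = Y i j) ->
  \det X = \det Y + cofactor X i0 i0.
Proof.
move=> Xi0 XY; pose U := \matrix_(i, j) if i == i0 then (i0 == j)%:R else X i j.
rewrite (@determinant_multilinear _ _ X Y U i0 1 1) ?mul1r.
- congr (_ + _); rewrite (@expand_det_unit_row _ i0) => [|j]; last by rewrite mxE eqxx.
  by apply: eq_cofactor => i j ii0 _; rewrite mxE (negbTE ii0).
- by apply/matrixP => ? j; rewrite !mxE eqxx !mul1r Xi0.
- by apply/matrixP => i j; rewrite !mxE XY // eq_sym neq_lift.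
- by apply/matrixP => i j; rewrite !mxE eq_sym (negbTE (neq_lift _ _)).
Qed.

(* [X] on [B], plus the identity on [B :\: A], padded by the identity outside
   [B]; the padding keeps the dimension fixed along the induction below. *)
Definition shift_mx X A B : 'M[R]_n :=
  \matrix_(i, j) if (i \in B) && (j \in B) then X i j + ((i == j) && (i \notin A))%:R
                 else (i == j)%:R.

Lemma det_shift_mx_expand X A B : A \subset B ->
  \det (shift_mx X A B)
    = \sum_(S : {set 'I_n} | (A \subset S) && (S \subset B)) \det (shift_mx X S S).
Proof.
move eq_k : #|B :\: A| => k; elim: k A B eq_k => [|k IH] A B eq_k sAB.
  have -> : B = A.
    by apply/eqP; rewrite eqEsubset sAB andbT -setD_eq0 -cards_eq0 eq_k.
  by rewrite (big_pred1 A) // => S; rewrite -eqEsubset eq_sym.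
have [j jBA] : exists j, j \in B :\: A by apply/set0Pn; rewrite -card_gt0 eq_k.
have [jA jB] : j \notin A /\ j \in B by move: jBA; rewrite inE => /andP.
have card_jA : #|B :\: (j |: A)| = k.
  by move: eq_k; rewrite (cardsD1 j) jBA add1n setDDl setUC => -[].
have card_jB : #|(B :\ j) :\: A| = k.
  by move: eq_k; rewrite (cardsD1 j) jBA add1n setDDl setDDl setUC => -[].
rewrite (@det_add_unit_row _ (shift_mx X (j |: A) B) j); first last.
- by move=> i l ij; rewrite !mxE !inE (negbTE ij).
- move=> l; rewrite !mxE jB !inE eqxx /=; case: (boolP (l \in B)) => lB /=.
    by rewrite jA andbF andbT addr0.
  have -> : (j == l) = false by apply: contraNF lB => /eqP <-.
  by rewrite addr0.
rewrite (@eq_cofactor _ (shift_mx X A (B :\ j))); last first.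
  by move=> i l ij lj; rewrite !mxE !inE ij lj.
rewrite -expand_det_unit_row => [|l]; last by rewrite mxE !inE eqxx.
rewrite IH // ?subUset ?sub1set ?jB // IH // ?subsetD1 ?sAB //.
rewrite [RHS](bigID (fun S => j \in S)) /=; congr (_ + _); apply: eq_bigl => S.
  by rewrite subUset sub1set; case: (j \in S); rewrite ?andbF ?andbT.
by rewrite subsetD1; case: (j \in S); rewrite ?andbF ?andbT.
Qed.

Lemma det_mxsub_bij m (f : 'I_m -> 'I_n) (Y : 'M[R]_n) :
  m = n -> injective f -> \det (mxsub f f Y) = \det Y.
Proof.
move=> eq_mn; case: n / eq_mn in f Y * => inj_f; set s := perm inj_f.
have -> : mxsub f f Y = row_perm s (col_perm s Y).
  by apply/matrixP => i j; rewrite !mxE !permE.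
rewrite row_permE col_permE !det_mulmx !det_perm odd_permV mulrCA.
by rewrite -signr_addb addbb expr0 mulr1.
Qed.

Lemma det_principal X S : \det (principal X S) = \det (shift_mx X S S).
Proof.
pose f (k : 'I_(#|S| + #|~: S|)) :=
  match split k with inl a => enum_val a | inr b => enum_val b end.
have fl a : f (lshift _ a) = enum_val a by rewrite /f (unsplitK (inl a)).
have fr b : f (rshift _ b) = enum_val b by rewrite /f (unsplitK (inr b)).
have inj_f : injective f.
  move=> k1 k2; rewrite -(splitK k1) -(splitK k2).
  case: (split k1) => a1; case: (split k2) => a2; rewrite ?fl ?fr => eq12.
  - by rewrite (enum_val_inj eq12).
  - by have := enum_valP a2; rewrite -eq12 inE enum_valP.
  - by have := enum_valP a1; rewrite eq12 inE enum_valP.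
  - by rewrite (enum_val_inj eq12).
rewrite -(@det_mxsub_bij _ f) ?inj_f ?cardsC ?card_ord //.
have inS (a : 'I_#|S|) : enum_val a \in S := enum_valP a.
have notinS (b : 'I_#|~: S|) : enum_val b \in S = false.
  by apply/negbTE; rewrite -in_setC enum_valP.
have neqSC (a : 'I_#|S|) (b : 'I_#|~: S|) : (enum_val a == enum_val b) = false.
  by apply/eqP => eq_ab; have := notinS b; rewrite -eq_ab inS.
have -> : mxsub f f (shift_mx X S S) = block_mx (principal X S) 0 0 1%:M.
  apply/matrixP => i j; rewrite -(splitK i) -(splitK j).
  case: (split i) => a; case: (split j) => b;
    rewrite ?block_mxEul ?block_mxEur ?block_mxEdl ?block_mxEdr !mxE ?fl ?fr.
  - by rewrite !inS andbF addr0.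
  - by rewrite notinS andbF neqSC.
  - by rewrite notinS eq_sym neqSC.
  - by rewrite notinS (inj_eq enum_val_inj).
by rewrite det_ublock det1 mulr1.
Qed.

Lemma sum_det_principal X A :
  \sum_(S : {set 'I_n} | A \subset S) \det (principal X S) = \det (shift_mx X A setT).
Proof.
rewrite det_shift_mx_expand ?subsetT //.
by apply: eq_big => [S|S _]; rewrite ?subsetT ?andbT ?det_principal.
Qed.

End PrincipalMinors.

Section Marginals.
Variables (R : fieldType) (n : nat) (X : 'M[R]_n) (A : {set 'I_n}).

Lemma dpp_prob_containsE B :
  dpp_prob_contains X B = \det (shift_mx X B setT) / \det (X + 1%:M).
Proof. by rewrite /dpp_prob_contains /dpp_prob -mulr_suml sum_det_principal. Qed.

Lemma unitmx_shift_mx : dpp_prob_contains X A != 0 -> shift_mx X A setT \in unitmx.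
Proof.
by rewrite dpp_prob_containsE unitmxE unitfE; apply: contraNneq => ->; rewrite mul0r.
Qed.

Lemma dpp_cond_marginalE i : i \notin A -> dpp_prob_contains X A != 0 ->
  dpp_cond_marginal X A i = 1 - invmx (shift_mx X A setT) i i.
Proof.
move=> iA pA; have uN := unitmx_shift_mx pA.
have dN : \det (shift_mx X A setT) != 0 by rewrite -unitfE -unitmxE.
have dXI : \det (X + 1%:M) != 0.
  by move: pA; rewrite dpp_prob_containsE; apply: contraNneq => ->; rewrite invr0 mulr0.
have detN : \det (shift_mx X (i |: A) setT)
    = \det (shift_mx X A setT) - cofactor (shift_mx X A setT) i i.
  apply/eqP; rewrite eq_sym subr_eq; apply/eqP.
  apply: det_add_unit_row => [j|j k ji]; rewrite !mxE !inE ?(negbTE ji) //.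
  by rewrite eqxx /= iA andbT andbF addr0.
rewrite /dpp_cond_marginal !dpp_prob_containsE invf_div mulrA mulfVK //.
by rewrite detN /invmx uN !mxE mulrBl divff // mulrC.
Qed.

End Marginals.

(** * Low-rank kernels *)

Section Selection.
Variables (R : comPzRingType) (M : nat) (A : {set 'I_M}).

Definition sel_mx : 'M[R]_(M, #|A|) := \matrix_(k, l) (k == enum_val l)%:R.

Lemma sum_eq_delta (T : finType) (a : T) (F : T -> R) : \sum_k (k == a)%:R * F k = F a.
Proof. by rewrite (bigD1 a) //= eqxx mul1r big1 ?addr0 // => k /negbTE ->; rewrite mul0r. Qed.

Lemma mul_tr_sel_mx : sel_mx^T *m sel_mx = 1%:M.
Proof.
apply/matrixP => l l'; rewrite !mxE; under eq_bigr do rewrite !mxE.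
by rewrite sum_eq_delta (inj_eq enum_val_inj).
Qed.

Lemma mul_sel_mx_tr i j : (sel_mx *m sel_mx^T) i j = ((i == j) && (i \in A))%:R.
Proof.
rewrite mxE; under eq_bigr do rewrite !mxE.
have [iA|iNA] := boolP (i \in A); last first.
  rewrite andbF big1 // => l _; case: eqP => [eil|]; last by rewrite mul0r.
  by move: iNA; rewrite eil enum_valP.
rewrite (bigD1 (enum_rank_in iA i)) //= enum_rankK_in // eqxx mul1r andbT eq_sym.
rewrite big1 ?addr0 // => l /negP ne_l; case: eqP => [eil|_]; last by rewrite mul0r.
by case: ne_l; apply/eqP/enum_val_inj; rewrite enum_rankK_in // eil.
Qed.

Lemma mul_tr_sel_mx_delta i : i \notin A -> sel_mx^T *m (delta_mx i 0 : 'cV_M) = 0.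
Proof.
move=> iNA; apply/matrixP => l z; rewrite !mxE big1 // => k _; rewrite !mxE.
case: eqP => [ekl|]; last by rewrite mul0r.
by case: eqP => [eki|]; rewrite ?mulr0 //; move: iNA; rewrite -eki ekl enum_valP.
Qed.

Lemma mul_tr_sel_mxE n (V : 'M[R]_(M, n)) : sel_mx^T *m V = \matrix_(l, k) V (enum_val l) k.
Proof.
apply/matrixP => l k; rewrite !mxE; under eq_bigr do rewrite !mxE.
exact: sum_eq_delta.
Qed.

Lemma shift_mx_lowrank K (V : 'M[R]_(M, K)) :
  shift_mx (V *m V^T) A setT = V *m V^T + 1%:M - sel_mx *m sel_mx^T.
Proof.
apply/matrixP => i j; set E := sel_mx *m _.
have -> : (V *m V^T + 1%:M - E) i j = (V *m V^T) i j + (i == j)%:R - E i j by rewrite !mxE.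
rewrite mul_sel_mx_tr [LHS]mxE !inE /=.
by case: (i \in A); rewrite ?andbT ?andbF ?addr0 ?addrK ?subr0.
Qed.

End Selection.
Arguments sel_mx {R M} A.

Section Woodbury.
Variables (R : comUnitRingType) (M K : nat) (A : {set 'I_M}) (V : 'M[R]_(M, K)).
Local Notation E := (sel_mx A : 'M[R]_(M, #|A|)).
Local Notation VA := (E^T *m V).
Local Notation B := (invmx (V^T *m V + 1%:M)).
Local Notation N := (shift_mx (V *m V^T) A setT).

Definition cond_core : 'M[R]_K :=
  B - (B *m VA^T) *m (invmx (VA *m B *m VA^T) *m (VA *m B)).

(* Woodbury: as [N = V V^T + I - E E^T], for [i \notin A] the solution of
   [N x = e_i] is [x = e_i - V G v_i - E z] with [G = cond_core] and
   [z = (VA B VA^T)^-1 VA B v_i], where [v_i = (row i V)^T]. *)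
Lemma invmx_shift_lowrank i : i \notin A ->
  V^T *m V + 1%:M \in unitmx -> VA *m B *m VA^T \in unitmx -> N \in unitmx ->
  invmx N i i = 1 - (row i V *m cond_core *m (row i V)^T) 0 0.
Proof.
move=> iNA uP uC uN; set G := cond_core; set Ci := invmx (VA *m B *m VA^T).
have PB : (V^T *m V + 1%:M) *m B = 1%:M by apply: mulmxV.
have CCi : VA *m B *m VA^T *m Ci = 1%:M by apply: mulmxV.
set e : 'cV[R]_M := delta_mx i 0; set v := (row i V)^T.
have Vte : V^T *m e = v by rewrite /v rowE trmx_mul trmx_delta.
set w := G *m v; set z := Ci *m (VA *m B) *m v.
set x := e - V *m w - E *m z.
have Pw : (V^T *m V + 1%:M) *m w = v - VA^T *m z.
  by rewrite /w /G /z mulmxBl mulmxBr !mulmxA PB !mul1mx.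
have VAw : VA *m w = 0.
  by rewrite /w /G mulmxBl mulmxBr !mulmxA CCi mul1mx subrr.
have Vtx : V^T *m x = w.
  have VtV : V^T *m V *m w = v - VA^T *m z - w by rewrite -Pw mulmxDl mul1mx addrK.
  have VtEz : V^T *m (E *m z) = VA^T *m z by rewrite mulmxA trmx_mul trmxK.
  rewrite /x !mulmxBr Vte VtEz [V^T *m (V *m w)]mulmxA VtV.
  by rewrite !opprB addrCA (addrC (VA^T *m z)) addNKr addrK.
have Etx : E^T *m x = - z.
  rewrite /x !mulmxBr mul_tr_sel_mx_delta // [E^T *m (V *m w)]mulmxA VAw sub0r.
  by rewrite mulmxA mul_tr_sel_mx mul1mx oppr0 sub0r.
have Nx : N *m x = e.
  rewrite shift_mx_lowrank mulmxBl mulmxDl mul1mx -!mulmxA Vtx Etx mulmxN opprK.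
  by rewrite /x addrA subrK addrC subrK.
have -> : invmx N i i = x i 0 by rewrite -[x](mulKmx uN) Nx -colE mxE.
have Ez : (E *m z) i 0 = 0.
  rewrite mxE big1 // => l _; rewrite mxE.
  by case: eqP iNA => [->|]; rewrite ?enum_valP ?mul0r.
have -> : x i 0 = 1 - (V *m w) i 0 - (E *m z) i 0 by rewrite !mxE eqxx.
by rewrite Ez subr0 -mulmxA -row_mul [row _ _ _ _]mxE.
Qed.

End Woodbury.

Section LowRankPositive.
Variables (R : realFieldType) (M K : nat) (A : {set 'I_M}) (V : 'M[R]_(M, K)).
Local Notation E := (sel_mx A : 'M[R]_(M, #|A|)).
Local Notation VA := (E^T *m V).
Local Notation B := (invmx (V^T *m V + 1%:M)).
Local Notation N := (shift_mx (V *m V^T) A setT).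

Lemma mulmx_tr_ge0 n (y : 'rV[R]_n) : 0 <= (y *m y^T) 0 0.
Proof. by rewrite mxE; apply: sumr_ge0 => k _; rewrite mxE -expr2 sqr_ge0. Qed.

Lemma mulmx_tr_gt0 n (y : 'rV[R]_n) : y != 0 -> 0 < (y *m y^T) 0 0.
Proof.
move=> y0; have [k yk0] : exists k, y 0 k != 0.
  apply/existsP; apply: contraR y0 => /existsPn y0; apply/eqP/matrixP => i k.
  by rewrite ord1 mxE; apply/eqP/negbNE/y0.
rewrite mxE (bigD1 k) //= mxE -expr2 ltr_pwDl ?lt_def ?sqr_ge0 ?expf_neq0 //.
by apply: sumr_ge0 => l _; rewrite mxE -expr2 sqr_ge0.
Qed.

Lemma posdef_gram_add1 : posdef (V^T *m V + 1%:M).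
Proof.
split; first by rewrite raddfD /= trmx_mul trmxK tr_scalar_mx.
move=> x x0; rewrite mulmxDr mulmxDl mulmx1 mxE.
have -> : x *m (V^T *m V) *m x^T = (x *m V^T) *m (x *m V^T)^T.
  by rewrite trmx_mul trmxK !mulmxA.
by rewrite ltr_wpDl ?mulmx_tr_ge0 ?mulmx_tr_gt0.
Qed.

(* [x VA = 0] with [x != 0] would give [(x E^T) N = 0], so [N] would be singular. *)
Lemma posdef_cond_gram : N \in unitmx -> posdef (VA *m B *m VA^T).
Proof.
move=> uN; have [sP pP] := posdef_gram_add1; set P := V^T *m V + 1%:M in sP pP *.
have uP : P \in unitmx by apply: posdef_unitmx posdef_gram_add1.
have sB : B^T = B by rewrite trmx_inv sP.
split; first by rewrite trmx_mul trmxK [(_ *m B)^T]trmx_mul sB mulmxA.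
move=> x x0; set y := x *m VA.
have y0 : y != 0.
  apply: contraTneq uN => y0; rewrite unitmxE unitfE negbK; apply/det0P.
  exists (x *m E^T).
    apply: contraNneq x0 => xE0.
    by rewrite -[x]mulmx1 -(mul_tr_sel_mx R A) mulmxA xE0 mul0mx.
  rewrite shift_mx_lowrank mulmxBr mulmxDr mulmx1 !mulmxA -(mulmxA x) -/y y0.
  by rewrite !mul0mx add0r -(mulmxA x) mul_tr_sel_mx mulmx1 subrr.
have -> : x *m (VA *m B *m VA^T) *m x^T = (y *m B) *m P *m (y *m B)^T.
  by rewrite !trmx_mul sB -!mulmxA [B *m (P *m _)]mulmxA mulVmx // mul1mx.
by apply: pP; apply: contraNneq y0 => yB0; rewrite -[y](mulmxKV uP) yB0 mul0mx.
Qed.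

Lemma dpp_cond_marginal_lowrank i : i \notin A ->
  0 < dpp_prob_contains (lowrank_kernel V) A ->
  dpp_cond_marginal (lowrank_kernel V) A i = (row i V *m cond_core A V *m (row i V)^T) 0 0.
Proof.
move=> iA /lt0r_neq0 pA; have uN := unitmx_shift_mx pA.
rewrite dpp_cond_marginalE // invmx_shift_lowrank ?subKr //.
- exact: posdef_unitmx posdef_gram_add1.
- exact: posdef_unitmx (posdef_cond_gram uN).
Qed.

End LowRankPositive.

(** * The marginal program *)

Section MarginalProgram.
Variables (R : fieldType) (M K : nat) (A : {set 'I_M}).
Local Notation op := (operand R).

Definition input_mx : 'M[op]_(M, K) :=
  \matrix_(i, j) Reg (index (i, j) (enum [set: 'I_M * 'I_K])).

Lemma size_mx_inputs (V : 'M[R]_(M, K)) : size (mx_inputs V) = (M * K)%N.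
Proof. by rewrite size_map -cardE cardsT card_prod !card_ord. Qed.

Lemma evm_input_mx (V : 'M[R]_(M, K)) : evm (mx_inputs V) input_mx V.
Proof.
have ijE i j : (i, j) \in enum [set: 'I_M * 'I_K] by rewrite mem_enum inE.
move=> i j; rewrite /ev mxE /= size_map index_mem ijE.
by rewrite (nth_map (i, j)) ?index_mem // nth_index.
Qed.

Lemma evm_rowsub r (O : 'M[op]_(M, K)) (V : 'M[R]_(M, K)) :
  evm r O V -> evm r (rowsub (@enum_val _ (mem A)) O) ((sel_mx A)^T *m V).
Proof. by move=> HO l k; rewrite mul_tr_sel_mxE !mxE. Qed.

Definition quad_gen (G : 'M[op]_K) (i : 'I_M) : gen R op :=
  do h <- mul_gen (row i input_mx) G;
  do q <- mul_gen h (row i input_mx)^T;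
  gret (q 0 0).

Definition marginal_gen : gen R ('I_M -> op) :=
  let VA : 'M[op]_(#|A|, K) := rowsub (@enum_val _ (mem A)) input_mx in
  do P0 <- mul_gen input_mx^T input_mx;
  do P <- add1_gen P0;
  do B <- inv_gen P;
  do T1 <- mul_gen VA B;
  do C <- mul_gen T1 VA^T;
  do Ci <- inv_gen C;
  do T2 <- mul_gen Ci T1;
  do T0 <- mul_gen B VA^T;
  do T3 <- mul_gen T0 T2;
  do G <- sub_gen B T3;
  gfor (quad_gen G) (enum 'I_M).

Lemma cost_marginal_gen : costle marginal_gen
  (6 * K ^ 3 + 6 * #|A| ^ 3 + 6 * #|A| * K ^ 2 + 4 * #|A| ^ 2 * K + 2 * K ^ 2
   + 4 * M * K ^ 2 + 2 * M * K)%N.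
Proof.
eapply cost_le.
  do 10 (apply: cost_bind => [|?]; first by [cost_leaf | apply: cost_inv_gen]).
  apply: cost_gfor => i.
  by do 2 (apply: cost_bind => [|?]; first by cost_leaf); cost_leaf.
rewrite size_enum_ord; nia.
Qed.

End MarginalProgram.

Section MarginalProgramCorrect.
Variables (R : realFieldType) (M K : nat) (A : {set 'I_M}).

Lemma wp_marginal_gen (V : 'M[R]_(M, K)) :
  shift_mx (V *m V^T) A setT \in unitmx ->
  wp (marginal_gen R K A) (mx_inputs V)
    (fun r g => forall i, ev r (g i) ((row i V *m cond_core A V *m (row i V)^T) 0 0)).
Proof.
move=> uN; have HV := evm_input_mx V; have HVA := evm_rowsub (A := A) HV.
apply: (wp_seq (wp_mul_gen (evm_tr HV) HV)) => s1 P0 HP0; frame.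
apply: (wp_seq (wp_add1_gen HP0)) => s2 P HP; frame.
apply: (wp_seq (wp_inv_gen HP (posdef_gram_add1 V))) => s3 B HB; frame.
apply: (wp_seq (wp_mul_gen HVA HB)) => s4 T1 HT1; frame.
apply: (wp_seq (wp_mul_gen HT1 (evm_tr HVA))) => s5 C HC; frame.
apply: (wp_seq (wp_inv_gen HC (posdef_cond_gram uN))) => s6 Ci HCi; frame.
apply: (wp_seq (wp_mul_gen HCi HT1)) => s7 T2 HT2; frame.
apply: (wp_seq (wp_mul_gen HB (evm_tr HVA))) => s8 T0 HT0; frame.
apply: (wp_seq (wp_mul_gen HT0 HT2)) => s9 T3 HT3; frame.
apply: (wp_seq (wp_sub_gen HB HT3)) => s10 G HG; frame.
pose q i : R := (row i V *m cond_core A V *m (row i V)^T) 0 0.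
apply: wp_conseq; first apply: (wp_gfor (val := q)) => i s.
  have HVi := evm_row i (evm_cat s HV).
  apply: (wp_seq (wp_mul_gen HVi (evm_cat s HG))) => s' h Hh; frame.
  apply: (wp_seq (wp_mul_gen Hh (evm_tr HVi))) => s'' q' Hq'.
  by apply: wp_ret; apply: Hq'.
by move=> s g Hg i; apply: Hg; rewrite mem_enum.
Qed.

End MarginalProgramCorrect.

Lemma marginal_cost_bound (M K a b : nat) : M = (a + b)%N ->
  (6 * K ^ 3 + 6 * a ^ 3 + 6 * a * K ^ 2 + 4 * a ^ 2 * K + 2 * K ^ 2
   + 4 * M * K ^ 2 + 2 * M * K <= 16 * (K ^ 3 + a ^ 3 + K ^ 2 * a ^ 2 + b * K ^ 2))%N.
Proof.
move=> ->; have sq x : (x <= x ^ 2)%N by case: x => // x; rewrite leq_pmulr.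
have K2 : (K ^ 2 <= K ^ 3)%N by case: K => // k; rewrite leq_pmull.
have aK2 : (a * K ^ 2 <= K ^ 2 * a ^ 2)%N by rewrite mulnC leq_mul2l sq orbT.
have a2K : (a ^ 2 * K <= K ^ 2 * a ^ 2)%N by rewrite mulnC leq_mul2r sq orbT.
have aK : (a * K <= K ^ 2 * a ^ 2)%N by rewrite mulnC; apply: leq_mul (sq K) (sq a).
have bK : (b * K <= b * K ^ 2)%N by rewrite leq_mul2l sq orbT.
nia.
Qed.

Theorem mainTheorem1 :
  exists C : nat,
  forall (R : realFieldType) (M K : nat) (A : {set 'I_M}),
    (1 <= M)%N -> (K <= M)%N ->
    exists (p : slp R) (out : 'I_M -> operand R),
      (size p <= C * (K ^ 3 + #|A| ^ 3 + K ^ 2 * #|A| ^ 2 + #|~: A| * K ^ 2))%N /\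
      forall V : 'M[R]_(M, K),
        0 < dpp_prob_contains (lowrank_kernel V) A ->
        forall i : 'I_M, i \notin A ->
          run_slp p (mx_inputs V) (out i) =
          Some (dpp_cond_marginal (lowrank_kernel V) A i).
Proof.
exists 16%N => R M K A _ _; pose prog := marginal_gen R K A (M * K).
exists prog.1, prog.2; split.
  apply: leq_trans (cost_marginal_gen R K A (M * K)) _.
  by apply: marginal_cost_bound; rewrite cardsC card_ord.
move=> V pA i iA; have uN := unitmx_shift_mx (lt0r_neq0 pA).
have [s [run_p out_p]] := wp_marginal_gen uN; rewrite size_mx_inputs in run_p out_p.
by rewrite /run_slp run_p /= dpp_cond_marginal_lowrank //; apply: out_p.
Qed.
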